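(* Let $\lambda'$ be a Dyck path of length $2(n-1)$ and $\lambda=U\lambda'D$. Then $P_{\lambda,\lambda_0}=P_{\lambda',\lambda_0}$.
   Context: Paths are words in $\{U,D\}$; a Dyck path (word) has equally many $U$ and $D$ and every prefix has at least as many $U$ as $D$. For a Dyck word $\lambda$: match each $U$ with the $D$ closing it; each matched pair is a chord. $A(\lambda)$ is the rooted plane tree with one edge per chord, the edge of chord $c$ hanging directly below the edge of the innermost chord strictly containing $c$, or from the root if none; siblings ordered left to right. Leaf edges are chords whose $U$ is immediately followed by its $D$; the capacity of a leaf edge (with respect to $\lambda_0$, the all-$U$ word of the same length as $\lambda$) is the number of $D$'s of $\lambda$ strictly left of that $U$. A labelling of Lascoux--Sch\''utzenberger type assigns non-negative integers to edges so that each edge's label is at most the labels of the edges directly below it and each leaf edge's label is at most its capacity. $P_{\lambda,\lambda_0}=\sum q^{\text{sum of labels}}$ over these labellings (equal to $1$ for the empty word). *)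

From mathcomp Require Import all_boot.
Set Implicit Arguments. Unset Strict Implicit. Unset Printing Implicit Defensive.

Definition U := true.
Definition D := false.

Definition nU (s : seq bool) : nat := count (fun b => b == U) s.
Definition nD (s : seq bool) : nat := count (fun b => b == D) s.

Definition dyck (w : seq bool) : bool :=
  (nU w == nD w) && all (fun t => nD (take t w) <= nU (take t w)) (iota 0 (size w).+1).

Definition letter (w : seq bool) (i : nat) : bool := nth D w i.
Definition isU (w : seq bool) (i : nat) : bool := (i < size w) && (letter w i == U).

Definition seg (w : seq bool) (i j : nat) : seq bool := drop i (take j w).

(* [closes w i j]: the D at position j is the D closing the U at position i,
   i.e. the first position j > i at which the segment [i..j] is balanced. *)
Definition closes (w : seq bool) (i j : nat) : bool :=
  [&& isU w i, i < j, j < size w, letter w j == D,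
      nU (seg w i j.+1) == nD (seg w i j.+1) &
      all (fun t => nD (seg w i t.+1) < nU (seg w i t.+1)) (iota i (j - i))].

(* chord of U at i strictly contains chord of U at j *)
Definition contains (w : seq bool) (i j : nat) : bool :=
  [&& isU w i, isU w j, i < j &
      [exists ci : 'I_(size w), exists cj : 'I_(size w),
         [&& closes w i ci, closes w j cj & cj < ci]]].

(* edge of chord j hangs directly below the edge of chord i:
   i is the innermost chord strictly containing j *)
Definition parent (w : seq bool) (i j : nat) : bool :=
  contains w i j &&
  ~~ [exists k : 'I_(size w), contains w i k && contains w k j].

Definition leaf (w : seq bool) (i : nat) : bool := isU w i && closes w i i.+1.

(* capacity w.r.t. lambda_0 = all-U word of the same length:
   number of D's of w strictly left of position i *)
Definition capacity (w : seq bool) (i : nat) : nat := nD (take i w).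

(* Edges (chords) are indexed by
   the positions i : 'I_(size w) of their U's; g is required to be 0 on non-U
   positions so that labellings of the edges correspond bijectively to such g. *)
Definition LS_labelling (w : seq bool) (g : 'I_(size w) -> nat) : bool :=
  [&& [forall i : 'I_(size w), ~~ isU w i ==> (g i == 0)],
      [forall i : 'I_(size w), forall j : 'I_(size w), parent w i j ==> (g i <= g j)] &
      [forall i : 'I_(size w), leaf w i ==> (g i <= capacity w i)]].

(* Coefficient of q^k in P_{w,lambda_0} = sum over LS labellings of q^(sum of labels):
   the number of LS labellings with label sum k.  Such labellings take values
   <= k, so they are exactly the finite functions into 'I_k.+1 counted here. *)
Definition Pcoef (w : seq bool) (k : nat) : nat :=
  #|[pred f : {ffun 'I_(size w) -> 'I_k.+1} |
     LS_labelling (fun i => nat_of_ord (f i))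
     && ((\sum_(i : 'I_(size w) | isU w i) nat_of_ord (f i)) == k)]|.

From mathcomp Require Import all_boot zify.
Set Implicit Arguments. Unset Strict Implicit. Unset Printing Implicit Defensive.

(* The chords of U l D are the chords of l shifted by one position, plus the
   outer chord, which strictly contains all of them: its edge is the root edge
   of A(U l D) with A(l) hanging below it.  Shifting preserves parents, leaves
   and capacities.  Labels weakly increase downwards, so the root label is at
   most the label of the leaf of the first factor UD of l, whose capacity is 0
   (for l empty the root edge is itself that leaf).  Hence the root label is 0,
   and deleting it is a weight-preserving bijection between the labellings of
   U l D and those of l. *)

Lemma nU_add_nD s : nU s + nD s = size s.
Proof. by elim: s => //= -[] s; rewrite /nU /nD /= => <-; lia. Qed.

Lemma nU_cat s t : nU (s ++ t) = nU s + nU t. Proof. exact: count_cat. Qed.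
Lemma nD_cat s t : nD (s ++ t) = nD s + nD t. Proof. exact: count_cat. Qed.

Lemma dyck_count w : dyck w -> nU w = nD w.
Proof. by case/andP => /eqP. Qed.

Lemma dyck_prefix w t : dyck w -> nD (take t w) <= nU (take t w).
Proof.
move=> /andP [/eqP balanced /allP prefixes].
have [t_le | /ltnW t_ge] := leqP t (size w); first by apply: prefixes; rewrite mem_iota.
by rewrite take_oversize // balanced.
Qed.

Lemma closes_lt w i j : closes w i j -> i < j < size w.
Proof. by case/and5P => _ -> -> _ _. Qed.

Lemma isU_lt w i : isU w i -> i < size w.
Proof. by case/andP. Qed.

Lemma containsP w i j : reflect [/\ isU w i, isU w j, i < j &
   exists ci cj, [/\ closes w i ci, closes w j cj & cj < ci]] (contains w i j).
Proof.
apply: (iffP and4P) => [[Ui Uj lt_ij /existsP [ci /existsP [cj /and3P [? ? ?]]]]|].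
  by split => //; exists ci, cj.
move=> [Ui Uj lt_ij [ci [cj [close_i close_j lt_c]]]]; split => //.
have /andP [_ lt_ci] := closes_lt close_i; have /andP [_ lt_cj] := closes_lt close_j.
by apply/existsP; exists (Ordinal lt_ci); apply/existsP; exists (Ordinal lt_cj); apply/and3P.
Qed.

Lemma contains_lt w i j : contains w i j -> i < j.
Proof. by case/containsP. Qed.

Lemma parentP w i j : reflect (contains w i j /\
   ~ exists k, contains w i k /\ contains w k j) (parent w i j).
Proof.
apply: (iffP andP) => [[cont_ij /existsPn no_mid]|[cont_ij no_mid]]; split => //.
  move=> [k [cont_ik cont_kj]].
  have /containsP [_ /isU_lt lt_k _ _] := cont_ik.
  by have := no_mid (Ordinal lt_k); rewrite /= cont_ik cont_kj.
by apply/existsP => -[k /andP [cont_ik cont_kj]]; apply: no_mid; exists k.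
Qed.

Lemma seg_nil w i : seg w i i = [::].
Proof. by rewrite /seg drop_oversize // size_take_min geq_minl. Qed.

Lemma seg_rcons w i j : i <= j < size w -> seg w i j.+1 = rcons (seg w i j) (letter w j).
Proof.
by case/andP => le_ij lt_j; rewrite /seg (take_nth D) // drop_rcons // size_take lt_j.
Qed.

Lemma leaf_UD w q : q.+1 < size w -> letter w q = U -> letter w q.+1 = D -> leaf w q.
Proof.
move=> lt_q Uq Dq; have lt_q' := ltnW lt_q.
have seg_q : seg w q q.+1 = [:: U] by rewrite seg_rcons ?leqnn // seg_nil Uq.
have Uq' : isU w q by rewrite /isU lt_q' Uq.
apply/andP; split => //; apply/and5P; split => //; first by rewrite Dq.
by rewrite subSnn /= seg_rcons ?leqnSn // seg_q Dq.
Qed.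

Lemma dyck_first_leaf l : dyck l -> 0 < size l ->
  exists2 q, q.+1 < size l & leaf l q && (capacity l q == 0).
Proof.
move=> dyck_l l_nonempty; set p := index D l.
have D_in_l : D \in l.
  rewrite -has_pred1 has_count; change (0 < nD l).
  by have := nU_add_nD l; rewrite dyck_count //; lia.
have lt_p : p < size l by rewrite index_mem.
have Dp : letter l p = D by rewrite /letter nth_index.
have [q def_p] : exists q, p = q.+1.
  case: p Dp lt_p => [|q] Dp lt_p; last by exists q.
  by have := dyck_prefix 1 dyck_l; rewrite (take_nth D) // take0 -/(letter _ _) Dp.
have Uq : letter l q = U.
  have := @before_find _ D (pred1 D) l q; rewrite -[find _ _]/p def_p ltnSn => /(_ isT).
  by rewrite /letter; case: nth.
have lt_q1 : q.+1 < size l by rewrite -def_p.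
exists q => //; apply/andP; split; first by apply: leaf_UD; rewrite -?def_p.
have : D \notin take q l.
  rewrite in_take_leq; last exact: ltnW (ltnW lt_q1).
  by rewrite -/p def_p -leqNgt.
by move/count_memPn => no_D; apply/eqP; exact: no_D.
Qed.

Lemma LSP w (g : 'I_(size w) -> nat) : reflect
  [/\ forall i : 'I_(size w), ~~ isU w i -> g i = 0,
      forall i j : 'I_(size w), parent w i j -> g i <= g j &
      forall i : 'I_(size w), leaf w i -> g i <= capacity w i] (LS_labelling g).
Proof.
apply: (iffP and3P) => [[/forallP zero /forallP mono /forallP cap]|[zero mono cap]].
  split=> [i /(implyP (zero i)) /eqP // | i j | i /(implyP (cap i)) //].
  by move/forallP: (mono i) => /(_ j) /implyP.
split; apply/forallP => i; last by apply/implyP => /cap.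
  by apply/implyP => /zero ->.
by apply/forallP => j; apply/implyP => /mono.
Qed.

Lemma LS_contains w (g : 'I_(size w) -> nat) : LS_labelling g ->
  forall i j : 'I_(size w), contains w i j -> g i <= g j.
Proof.
case/LSP => _ mono _.
suff le_g n (i j : 'I_(size w)) : j - i < n -> contains w i j -> g i <= g j.
  by move=> i j; apply: (le_g (j - i).+1).
elim: n i j => // n IHn i j lt_ji cont_ij.
have [/mono // | ] := boolP (parent w i j).
rewrite /parent cont_ij negbK => /existsP [k /andP [cont_ik cont_kj]].
have := contains_lt cont_ik; have := contains_lt cont_kj => lt_kj lt_ik.
by rewrite (@leq_trans (g k)) // IHn //; lia.
Qed.

Definition wrapUD (w : seq bool) : seq bool := U :: rcons w D.

Section WrapUD.

Variable l : seq bool.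

Lemma size_wrapUD : size (wrapUD l) = (size l).+2.
Proof. by rewrite /= size_rcons. Qed.

Lemma nU_wrapUD : nU (wrapUD l) = (nU l).+1.
Proof. by rewrite /= -cats1 nU_cat addn0. Qed.

Lemma nD_wrapUD : nD (wrapUD l) = (nD l).+1.
Proof. by rewrite /= -cats1 nD_cat addn1. Qed.

Lemma letter_wrapUDS i : letter (wrapUD l) i.+1 = letter l i.
Proof.
rewrite /letter /= nth_rcons; case: ltnP => // le_i.
by rewrite nth_default //; case: eqP.
Qed.

Lemma isU_wrapUDS i : isU (wrapUD l) i.+1 = isU l i.
Proof.
rewrite /isU letter_wrapUDS size_wrapUD !ltnS leq_eqVlt.
have [-> | _] := eqVneq i (size l); last by [].
by rewrite ltnn /letter nth_default.
Qed.

Lemma take_wrapUDS j : j <= size l -> take j.+1 (wrapUD l) = U :: take j l.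
Proof. by move=> le_j; rewrite /= -cats1 takel_cat. Qed.

Lemma seg_wrapUDS i j : j <= size l -> seg (wrapUD l) i.+1 j.+1 = seg l i j.
Proof. by move=> le_j; rewrite /seg take_wrapUDS. Qed.

Lemma capacity_wrapUDS i : i <= size l -> capacity (wrapUD l) i.+1 = capacity l i.
Proof. by move=> le_i; rewrite /capacity take_wrapUDS. Qed.

Hypothesis dyck_l : dyck l.

Lemma closes_wrapUD_last i : closes (wrapUD l) i.+1 (size l).+1 = false.
Proof.
apply/negP => /and5P [+ _ _ _ /andP [/eqP balanced _]].
rewrite isU_wrapUDS => /andP [lt_i _].
move: balanced; rewrite /seg take_oversize ?size_wrapUD // [drop _ _]/= drop_rcons 1?ltnW //.
rewrite -cats1 nU_cat nD_cat /=.
have := dyck_prefix i dyck_l; have := dyck_count dyck_l.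
have := nU_cat (take i l) (drop i l); have := nD_cat (take i l) (drop i l).
rewrite cat_take_drop; lia.
Qed.

Lemma closes_wrapUDS i j : closes (wrapUD l) i.+1 j.+1 = closes l i j.
Proof.
have [le_ji | lt_ij] := leqP j i.
  by apply/idP/idP => /closes_lt /andP [? _]; lia.
have [lt_j | le_j] := ltnP j (size l).
  rewrite /closes isU_wrapUDS size_wrapUD !ltnS letter_wrapUDS seg_wrapUDS // lt_ij lt_j ltnW //.
  rewrite subSS -[iota i.+1 _]/(iota (1 + i) _) iotaDl all_map; congr [&& _, _, _, _, _ & _].
  by apply: eq_in_all => t; rewrite mem_iota /= => /andP [_ lt_t]; rewrite seg_wrapUDS //; lia.
have -> : closes l i j = false by apply/negP => /closes_lt /andP [_]; rewrite ltnNge le_j.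
have [lt_lj | le_jl] := ltnP (size l) j.
  by apply/negP => /closes_lt /andP [_]; rewrite size_wrapUD ltnS ltnNge lt_lj.
have -> : j = size l by apply/eqP; rewrite eqn_leq le_jl le_j.
exact: closes_wrapUD_last.
Qed.

Lemma closes_wrapUD_root : closes (wrapUD l) 0 (size l).+1.
Proof.
apply/and5P; split=> //; first by rewrite size_wrapUD.
  by rewrite letter_wrapUDS /letter nth_default.
apply/andP; split.
  by rewrite /seg take_oversize ?size_wrapUD // drop0 nU_wrapUD nD_wrapUD dyck_count.
apply/allP => t; rewrite subn0 mem_iota add0n => /andP [_ lt_t].
by rewrite /seg drop0 take_wrapUDS // ltnS dyck_prefix.
Qed.

Lemma contains_wrapUDS i j : contains (wrapUD l) i.+1 j.+1 = contains l i j.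
Proof.
apply/containsP/containsP; rewrite !isU_wrapUDS ltnS.
  move=> [Ui Uj lt_ij [ci [cj [close_i close_j lt_c]]]]; split => //.
  case: ci close_i lt_c => [/closes_lt //|ci]; case: cj close_j => [/closes_lt //|cj].
  by rewrite !closes_wrapUDS // => close_j close_i lt_c; exists ci, cj.
move=> [Ui Uj lt_ij [ci [cj [close_i close_j lt_c]]]]; split => //.
by exists ci.+1, cj.+1; rewrite !closes_wrapUDS.
Qed.

Lemma parent_wrapUDS i j : parent (wrapUD l) i.+1 j.+1 = parent l i j.
Proof.
apply/parentP/parentP; rewrite contains_wrapUDS => -[cont_ij no_mid]; split => // -[k].
  by move=> [cont_ik cont_kj]; apply: no_mid; exists k.+1; rewrite !contains_wrapUDS.
case: k => [[/contains_lt] //|k]; rewrite !contains_wrapUDS => mid.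
by apply: no_mid; exists k.
Qed.

Lemma leaf_wrapUDS i : leaf (wrapUD l) i.+1 = leaf l i.
Proof. by rewrite /leaf isU_wrapUDS closes_wrapUDS. Qed.

Lemma LS_wrapUD_root (g : 'I_(size (wrapUD l)) -> nat) (i : 'I_(size (wrapUD l))) :
  LS_labelling g -> i = 0 :> nat -> g i = 0.
Proof.
move=> LS_g i0; have /LSP [_ _ cap] := LS_g.
have [/size0nil l0 | l_nonempty] := posnP (size l).
  have leaf_i : leaf (wrapUD l) i by rewrite i0 l0.
  by apply/eqP; rewrite -leqn0 (leq_trans (cap i leaf_i)) // /capacity i0 take0.
have [q lt_q /andP [leaf_q /eqP cap_q]] := dyck_first_leaf dyck_l l_nonempty.
have lt_q' : q.+1 < size (wrapUD l) by rewrite size_wrapUD; lia.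
pose oq := Ordinal lt_q'.
have cont_iq : contains (wrapUD l) i oq.
  apply/containsP; rewrite i0 /= isU_wrapUDS; split => //; first by case/andP: leaf_q.
  exists (size l).+1, q.+2; split; [exact: closes_wrapUD_root | | by []].
  by rewrite closes_wrapUDS //; case/andP: leaf_q.
have := LS_contains LS_g cont_iq; have := cap oq.
rewrite /= leaf_wrapUDS capacity_wrapUDS ?cap_q; last exact: ltnW (ltnW lt_q).
by move=> /(_ leaf_q) le_q0 le_iq; apply/eqP; rewrite -leqn0 (leq_trans le_iq le_q0).
Qed.

End WrapUD.

Section WrapLabels.

Variables (l : seq bool) (k : nat).

Lemma shift_ord_subproof (j : 'I_(size l)) : j.+1 < size (wrapUD l).
Proof. by rewrite size_wrapUD ltnS leqW. Qed.

Definition shift_ord (j : 'I_(size l)) : 'I_(size (wrapUD l)) := Ordinal (shift_ord_subproof j).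

Lemma ord_wrapUDP (i : 'I_(size (wrapUD l))) :
  [\/ i = 0 :> nat, i = (size l).+1 :> nat | exists j, i = shift_ord j].
Proof.
case: i => -[|t] lt_t /=; first by constructor 1.
have [lt_tl | gt_tl | eq_tl] := ltngtP t (size l).
- by constructor 3; exists (Ordinal lt_tl); apply: val_inj.
- by have := lt_t; rewrite size_wrapUD; lia.
- by constructor 2; rewrite eq_tl.
Qed.

Definition pad_label (g : 'I_(size l) -> 'I_k.+1) (t : nat) : 'I_k.+1 :=
  if t is s.+1 then if insub s is Some j then g j else ord0 else ord0.

Definition extend_labels (g : {ffun 'I_(size l) -> 'I_k.+1}) :
  {ffun 'I_(size (wrapUD l)) -> 'I_k.+1} := [ffun i : 'I_(size (wrapUD l)) => pad_label g i].

Definition restrict_labels (f : {ffun 'I_(size (wrapUD l)) -> 'I_k.+1}) :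
  {ffun 'I_(size l) -> 'I_k.+1} := [ffun j => f (shift_ord j)].

Lemma extend_labels_shift g j : extend_labels g (shift_ord j) = g j.
Proof. by rewrite ffunE /= valK. Qed.

Lemma extend_labels_last g (i : 'I_(size (wrapUD l))) :
  i = (size l).+1 :> nat -> extend_labels g i = ord0.
Proof. by rewrite ffunE => ->; rewrite /= insubN // ltnn. Qed.

Lemma extend_labelsK : cancel extend_labels restrict_labels.
Proof. by move=> g; apply/ffunP => j; rewrite ffunE extend_labels_shift. Qed.

Lemma weight_extend_labels g :
  \sum_(i : 'I_(size (wrapUD l)) | isU (wrapUD l) i) (extend_labels g i : nat) =
  \sum_(j : 'I_(size l) | isU l j) (g j : nat).
Proof.
under eq_bigr do rewrite ffunE.
rewrite -(big_mkord (fun t => isU (wrapUD l) t) (fun t => pad_label g t : nat)) size_wrapUD.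
rewrite big_mkcond big_nat_recl // big_nat_recr //= insubN ?ltnn // if_same add0n addn0.
rewrite big_mkord [RHS]big_mkcond; apply: eq_bigr => j _.
by rewrite isU_wrapUDS valK.
Qed.

Hypothesis dyck_l : dyck l.

Lemma LS_extend_labels (g : {ffun 'I_(size l) -> 'I_k.+1}) :
  LS_labelling (fun j => g j : nat) -> LS_labelling (fun i => extend_labels g i : nat).
Proof.
case/LSP => zero mono cap; apply/LSP; split.
- move=> i; case: (ord_wrapUDP i) => [i0 | /extend_labels_last -> // | [j ->]].
    by rewrite ffunE i0.
  by rewrite extend_labels_shift isU_wrapUDS; apply: zero.
- move=> i j; case: (ord_wrapUDP i) => [i0 | /extend_labels_last -> // | [a ->]].
    by rewrite ffunE i0.
  case: (ord_wrapUDP j) => [j0 | jl | [b ->]].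
  + by move=> /parentP [/contains_lt]; rewrite j0.
  + by move=> /parentP [/containsP [_]]; rewrite jl isU_wrapUDS => /isU_lt; rewrite ltnn.
  + by rewrite !extend_labels_shift parent_wrapUDS //; apply: mono.
- move=> i; case: (ord_wrapUDP i) => [i0 | /extend_labels_last -> // | [j ->]].
    by rewrite ffunE i0.
  rewrite extend_labels_shift leaf_wrapUDS // capacity_wrapUDS; last exact: ltnW.
  exact: cap.
Qed.

Lemma LS_restrict_labels (f : {ffun 'I_(size (wrapUD l)) -> 'I_k.+1}) :
  LS_labelling (fun i => f i : nat) -> LS_labelling (fun j => restrict_labels f j : nat).
Proof.
case/LSP => zero mono cap; apply/LSP; split.
- by move=> j Uj; rewrite ffunE zero //= isU_wrapUDS.
- by move=> a b par_ab; rewrite !ffunE mono //= parent_wrapUDS.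
- move=> j leaf_j; rewrite ffunE -capacity_wrapUDS; last exact: ltnW.
  by rewrite cap //= leaf_wrapUDS.
Qed.

Lemma restrict_labelsK (f : {ffun 'I_(size (wrapUD l)) -> 'I_k.+1}) :
  LS_labelling (fun i => f i : nat) -> extend_labels (restrict_labels f) = f.
Proof.
move=> LS_f; apply/ffunP => i; case: (ord_wrapUDP i) => [i0 | il | [j ->]].
- apply: val_inj; rewrite ffunE i0 /=; symmetry.
  exact: (LS_wrapUD_root dyck_l (g := fun i => f i : nat)).
- apply: val_inj; rewrite extend_labels_last //=; symmetry.
  by case/LSP: LS_f => zero _ _; rewrite zero // il isU_wrapUDS /isU ltnn.
- by rewrite extend_labels_shift ffunE.
Qed.

End WrapLabels.

Lemma Pcoef_wrapUD l k : dyck l -> Pcoef (wrapUD l) k = Pcoef l k.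
Proof.
move=> dyck_l; rewrite /Pcoef -(card_imset _ (can_inj (@extend_labelsK l k))).
apply: eq_card => f; rewrite inE; apply/andP/imsetP => [[LS_f weight_f] | [g]].
  exists (restrict_labels f); last by rewrite restrict_labelsK.
  rewrite inE LS_restrict_labels //=.
  by rewrite -(restrict_labelsK dyck_l LS_f) weight_extend_labels in weight_f.
by rewrite inE => /andP [LS_g weight_g] ->; rewrite LS_extend_labels // weight_extend_labels.
Qed.

Theorem mainTheorem10 (n : nat) (lam' : seq bool) :
  dyck lam' -> size lam' = 2 * (n - 1) ->
  forall k : nat, Pcoef (U :: rcons lam' D) k = Pcoef lam' k.
Proof.
(* the length condition holds for every Dyck word *)
by move=> dyck_lam' _ k; apply: Pcoef_wrapUD.
Qed.
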